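(* Let $v_1,v_2\in\mathbb{R}^2$ be two linearly independent unit vectors, and let $\xi\in\mathbb{R}^2$ satisfy $d_1:=\langle v_1,\xi\rangle\ge0$ and $d_2:=\langle v_2,\xi\rangle\ge 0$. Define $$\gamma_{12}:=\Pr\{\langle X,v_1\rangle\le 0,\ \langle X,v_2\rangle\le0\}\quad\text{for } X\sim\mathcal{N}(\xi,I).$$ Then $\alpha_{12}:=\langle v_1,v_2\rangle$ is identifiable from $d_1,d_2,\gamma_{12}$. That is, if $(v_1',v_2',\xi')$ is another triple satisfying the same hypotheses with the same values of $d_1,d_2,\gamma_{12}$, then $\langle v_1',v_2'\rangle=\langle v_1,v_2\rangle$. *)

From HB Require Import structures.
From mathcomp Require Import all_boot all_order all_algebra.
From mathcomp Require Import all_classical all_reals all_analysis.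
Set Implicit Arguments. Unset Strict Implicit. Unset Printing Implicit Defensive.
Import Order.TTheory GRing.Theory Num.Theory.
Local Open Scope ring_scope.

Definition dot2 {R : realType} (u v : R * R) : R := u.1 * v.1 + u.2 * v.2.

Definition lin_indep2 {R : realType} (u v : R * R) : Prop :=
  forall a b : R, a * u.1 + b * v.1 = 0 -> a * u.2 + b * v.2 = 0 -> a = 0 /\ b = 0.

Definition gauss2_pdf {R : realType} (xi : R * R) (x : R * R) : R :=
  (2 * pi)^-1 * expR (- ((x.1 - xi.1) ^+ 2 + (x.2 - xi.2) ^+ 2) / 2).

Definition gauss2_prob {R : realType} (xi : R * R) (A : set (R * R)) : \bar R :=
  (\int[(@lebesgue_measure R \x @lebesgue_measure R)%E]_(x in A) (gauss2_pdf xi x)%:E)%E.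

Definition gamma12 {R : realType} (v1 v2 xi : R * R) : \bar R :=
  gauss2_prob xi [set x | dot2 x v1 <= 0 /\ dot2 x v2 <= 0].

Definition admissible {R : realType} (v1 v2 xi : R * R) : Prop :=
  [/\ dot2 v1 v1 = 1, dot2 v2 v2 = 1, lin_indep2 v1 v2,
      0 <= dot2 v1 xi & 0 <= dot2 v2 xi].

(* Translating by [xi] turns gamma12 into the standard Gaussian mass of the
   wedge {z | <z, v1> <= -d1, <z, v2> <= -d2}.  The standard Gaussian density is
   invariant under orthogonal maps (a rotation is a product of three shears,
   and shears preserve Lebesgue measure by Fubini), so rotating [v2] to (1, 0)
   shows that this mass only depends on alpha = <v1, v2>, d1 and d2.  For
   alpha < alpha', the wedge of alpha, after possibly exchanging the roles of
   (v1, d1) and (v2, d2), is contained in the wedge of alpha' and misses a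
   whole square of it: the mass is strictly increasing in alpha, hence
   determines it. *)

From HB Require Import structures.
From mathcomp Require Import all_boot all_order all_algebra.
From mathcomp Require Import all_classical all_reals all_analysis.
From mathcomp Require Import ring lra measurable_realfun.
Import Order.TTheory GRing.Theory Num.Theory.
Local Open Scope classical_set_scope.
Local Open Scope ring_scope.

Section lebesgue_affine.
Context {R : realType}.
Local Notation mu := (@lebesgue_measure R).

Definition affine (k c : R) : measurableTypeR R -> measurableTypeR R :=
  fun x => k * x + c.

Lemma measurable_affine k c : measurable_fun setT (affine k c).
Proof. by apply: measurable_funD => //; apply: measurable_funM. Qed.

(* The measure instance of a pushforward depends on a measurability proof, so
   it is not found by inference. *)
Let affine_image_measure k c :=
  measure_function_pushforward__canonical__measure_function_Measure
    mu (measurable_affine k c).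

Lemma affine_preimage_itv (k c a b : R) : 0 < k ->
  affine k c @^-1` `]a, b] = `](a - c) / k, (b - c) / k]%classic.
Proof.
move=> k0; apply/seteqP; split => x /=;
  by rewrite /affine !in_itv /= ?ltr_pdivrMr ?ler_pdivlMr // => /andP[? ?];
     apply/andP; split; lra.
Qed.

Lemma affine_preimage_itvN (k c a b : R) : k < 0 ->
  affine k c @^-1` `]a, b] = `[(b - c) / k, (a - c) / k[%classic.
Proof.
move=> k0; apply/seteqP; split => x /=;
  by rewrite /affine !in_itv /= ?ltr_ndivrMr ?ler_ndivlMr ?ler_ndivrMr
    ?ltr_ndivlMr // => /andP[? ?]; apply/andP; split; lra.
Qed.

Lemma lebesgue_measure_affine (k c : R) (A : set R) : k != 0 -> measurable A ->
  (pushforward mu (affine k c) A = (`|k|^-1)%:E * mu A)%E.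
Proof.
move=> k0 mA.
have -> : mu A = mscale (`|k|%:nng) (affine_image_measure k c) A.
  apply: lebesgue_measure_unique => //= _ [[a b]] _ <-.
  rewrite /mscale /= /pushforward.
  have [kp|kn] := ltrP 0 k.
    rewrite affine_preimage_itv // !lebesgue_measure_itv /= !lte_fin.
    rewrite ltr_pM2r ?invr_gt0 // ltrD2r.
    case: ifPn => ab; last by rewrite mule0.
    by rewrite -EFinM -EFinD gtr0_norm //; congr (_%:E); field; lra.
  have kn' : k < 0 by rewrite lt_neqAle k0 kn.
  rewrite affine_preimage_itvN // !lebesgue_measure_itv /= !lte_fin.
  rewrite ltr_nM2r ?invr_lt0 // ltrD2r.
  case: ifPn => ab; last by rewrite mule0.
  by rewrite -EFinM -EFinD ltr0_norm //; congr (_%:E); field; lra.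
by rewrite /mscale /= muleA -EFinM mulVf ?normr_eq0 // mul1e.
Qed.

Lemma ge0_integral_affine (k c : R) (f : R -> \bar R) : k != 0 ->
  measurable_fun setT f -> (forall x, (0 <= f x)%E) ->
  (\int[mu]_x f (k * x + c)%R = (`|k|^-1)%:E * \int[mu]_x f x)%E.
Proof.
move=> k0 mf f0.
transitivity (\int[mu]_(x in affine k c @^-1` setT) (f \o affine k c) x)%E.
  by rewrite preimage_setT.
rewrite -ge0_integral_pushforward //; last exact: measurable_affine.
have k1_ge0 : (0 <= `|k|^-1 :> R) by rewrite invr_ge0.
transitivity (\int[mscale (NngNum k1_ge0) mu]_x f x)%E.
  apply: eq_measure_integral; first exact: measurable_affine.
  by move=> _ A mA _ /=; rewrite lebesgue_measure_affine.
by rewrite ge0_integral_mscale.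
Qed.

End lebesgue_affine.

Section plane_maps.
Context {R : realType}.
Local Notation mu2 := (@lebesgue_measure R \x @lebesgue_measure R)%E.
Local Notation T2 := (measurableTypeR R * measurableTypeR R)%type.

Definition lin2 (p q r t : R) (z : T2) : T2 :=
  (p * z.1 + q * z.2, r * z.1 + t * z.2).
Definition shear1 (k c : R) (z : T2) : T2 := (z.1 + k * z.2 + c, z.2).
Definition shear2 (k c : R) (z : T2) : T2 := (z.1, z.2 + k * z.1 + c).
Definition translate2 (xi : R * R) (z : T2) : T2 := (z.1 + xi.1, z.2 + xi.2).

Lemma translate2_shears xi : translate2 xi =1 shear1 0 xi.1 \o shear2 0 xi.2.
Proof. by move=> z; rewrite /translate2 /shear1 /shear2 /= !mul0r !addr0. Qed.

Lemma measurable_affine2 (a b c : R) :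
  measurable_fun setT (fun z : T2 => a * z.1 + b * z.2 + c).
Proof.
apply: measurable_funD => //; apply: measurable_funD.
  by apply: measurable_funM => //; exact: measurable_fst.
by apply: measurable_funM => //; exact: measurable_snd.
Qed.

Lemma measurable_lin2 p q r t : measurable_fun setT (lin2 p q r t).
Proof.
apply/measurable_fun_pairP; split.
  by apply: eq_measurable_fun (measurable_affine2 p q 0) => z _; rewrite addr0.
by apply: eq_measurable_fun (measurable_affine2 r t 0) => z _; rewrite addr0.
Qed.

Lemma measurable_shear1 k c : measurable_fun setT (shear1 k c).
Proof.
apply/measurable_fun_pairP; split; last exact: measurable_snd.
by apply: eq_measurable_fun (measurable_affine2 1 k c) => z _; rewrite mul1r.
Qed.

Lemma measurable_shear2 k c : measurable_fun setT (shear2 k c).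
Proof.
apply/measurable_fun_pairP; split; first exact: measurable_fst.
apply: eq_measurable_fun (measurable_affine2 k 1 c) => z _.
by rewrite mul1r (addrC (k * _)).
Qed.

Lemma measurable_translate2 xi : measurable_fun setT (translate2 xi).
Proof.
have := measurableT_comp (measurable_shear1 0 xi.1) (measurable_shear2 0 xi.2).
by apply: eq_measurable_fun => z _; rewrite translate2_shears.
Qed.

Section invariance.
Variable h : T2 -> \bar R.
Hypotheses (mh : measurable_fun setT h) (h_ge0 : forall z, (0 <= h z)%E).

Lemma ge0_integral_shear1 k c :
  (\int[mu2]_z h (shear1 k c z) = \int[mu2]_z h z)%E.
Proof.
rewrite (fubini_tonelli2 (h \o shear1 k c)) //=; last first.
  by apply: measurableT_comp; last exact: measurable_shear1.
rewrite (fubini_tonelli2 h) //= /fubini_G /=; apply: eq_integral => y _.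
have := ge0_integral_affine 1 (k * y + c) (fun x => h (x, y)) (oner_neq0 R).
rewrite normr1 invr1 mul1e => <- //; last exact: measurable_fun_pair1.
by apply: eq_integral => x _; rewrite mul1r addrA.
Qed.

Lemma ge0_integral_shear2 k c :
  (\int[mu2]_z h (shear2 k c z) = \int[mu2]_z h z)%E.
Proof.
rewrite (fubini_tonelli1 (h \o shear2 k c)) //=; last first.
  by apply: measurableT_comp; last exact: measurable_shear2.
rewrite (fubini_tonelli1 h) //= /fubini_F /=; apply: eq_integral => x _.
have := ge0_integral_affine 1 (k * x + c) (fun y => h (x, y)) (oner_neq0 R).
rewrite normr1 invr1 mul1e => <- //; last exact: measurable_fun_pair2.
by apply: eq_integral => y _; rewrite mul1r addrA.
Qed.

Lemma ge0_integral_reflect2 :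
  (\int[mu2]_z h (lin2 1 0 0 (-1) z) = \int[mu2]_z h z)%E.
Proof.
rewrite (fubini_tonelli1 (h \o lin2 1 0 0 (-1))) //=; last first.
  by apply: measurableT_comp; last exact: measurable_lin2.
rewrite (fubini_tonelli1 h) //= /fubini_F /=; apply: eq_integral => x _.
have N1_neq0 : (-1 : R) != 0 by rewrite oppr_eq0 oner_eq0.
have := ge0_integral_affine (-1) 0 (fun y => h (x, y)) N1_neq0.
rewrite normrN normr1 invr1 mul1e => <- //; last exact: measurable_fun_pair2.
by apply: eq_integral => y _; rewrite /lin2 /= mul1r !mul0r !addr0 add0r.
Qed.

End invariance.

Lemma ge0_integral_translate2 (h : T2 -> \bar R) xi :
  measurable_fun setT h -> (forall z, (0 <= h z)%E) ->
  (\int[mu2]_z h (translate2 xi z) = \int[mu2]_z h z)%E.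
Proof.
move=> mh h0; under eq_integral do rewrite translate2_shears.
rewrite (ge0_integral_shear2 (h \o shear1 0 xi.1) _ (fun z => h0 _)).
  exact: ge0_integral_shear1.
by apply: measurableT_comp; last exact: measurable_shear1.
Qed.

Lemma lin2_rotation_shears {c s : R} : c ^+ 2 + s ^+ 2 = 1 -> 1 + c != 0 ->
  lin2 c (- s) s c =1
    shear1 (- (s / (1 + c))) 0 \o shear2 s 0 \o shear1 (- (s / (1 + c))) 0.
Proof.
move=> cs c1 z; set t := s / (1 + c).
have ts : t * s = 1 - c.
  rewrite /t mulrAC -expr2 (_ : s ^+ 2 = (1 - c) * (1 + c)) ?mulfK //.
  have -> : (1 - c) * (1 + c) = 1 - c ^+ 2 by ring.
  by rewrite -cs addrAC subrr add0r.
have tc : t * (1 + c) = s by rewrite /t divfK.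
have [e1 e2] : t * s - (1 - c) = 0 /\ t * (1 + c) - s = 0.
  by rewrite ts tc !subrr.
rewrite /lin2 /shear1 /shear2 /= !addr0; congr (_, _);
  apply/eqP; rewrite -subr_eq0; apply/eqP.
  transitivity ((z.1 - t * z.2) * (t * s - (1 - c)) + z.2 * (t * (1 + c) - s)).
    by ring.
  by rewrite e1 e2 !mulr0 addr0.
by transitivity (z.2 * (t * s - (1 - c))); [ring | rewrite e1 mulr0].
Qed.

Lemma ge0_integral_rotation (h : T2 -> \bar R) (c s : R) :
  c ^+ 2 + s ^+ 2 = 1 ->
  measurable_fun setT h -> (forall z, (0 <= h z)%E) ->
  (\int[mu2]_z h (lin2 c (- s) s c z) = \int[mu2]_z h z)%E.
Proof.
have shears g c' s' : c' ^+ 2 + s' ^+ 2 = 1 -> 1 + c' != 0 ->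
    measurable_fun setT g -> (forall z, (0 <= g z)%E) ->
    (\int[mu2]_z g (lin2 c' (- s') s' c' z) = \int[mu2]_z g z)%E.
  move=> cs c1 mg g0; under eq_integral do rewrite (lin2_rotation_shears cs c1).
  set t := s' / (1 + c').
  rewrite (ge0_integral_shear1 (g \o shear1 (- t) 0 \o shear2 s' 0) _
    (fun z => g0 _)); last first.
    apply: measurableT_comp; last exact: measurable_shear2.
    by apply: measurableT_comp; last exact: measurable_shear1.
  rewrite (ge0_integral_shear2 (g \o shear1 (- t) 0) _ (fun z => g0 _)).
    exact: ge0_integral_shear1.
  by apply: measurableT_comp; last exact: measurable_shear1.
move=> cs mh h0; have [c1|c1] := eqVneq (1 + c) 0; last exact: shears.
have c_N1 : c = -1 by apply/eqP; rewrite -subr_eq0 opprK addrC c1.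
have s0 : s = 0.
  apply/eqP; rewrite -sqrf_eq0 -(addKr (c ^+ 2) (s ^+ 2)) cs c_N1.
  by rewrite sqrrN expr1n addNr.
have half_turn z : lin2 c (- s) s c z = lin2 0 (- 1) 1 0 (lin2 0 (- 1) 1 0 z).
  by rewrite /lin2 c_N1 s0 /=; congr (_, _); ring.
have quarter_turn : (0 : R) ^+ 2 + 1 ^+ 2 = 1 by rewrite expr0n expr1n add0r.
have quarter_turn1 : (1 + 0 : R) != 0 by rewrite addr0 oner_eq0.
under eq_integral do rewrite half_turn.
rewrite (shears (h \o lin2 0 (-1) 1 0) _ _ _ _ _ (fun z => h0 _)) //.
  exact: shears.
by apply: measurableT_comp; last exact: measurable_lin2.
Qed.

Lemma orthonormal_rows {p q r t : R} :
  p ^+ 2 + q ^+ 2 = 1 -> r ^+ 2 + t ^+ 2 = 1 -> p * r + q * t = 0 ->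
  (r = - q /\ t = p) \/ (r = q /\ t = - p).
Proof.
move=> pq rt o; pose m := p * t - q * r.
have rE : r = - q * m.
  apply/eqP; rewrite -subr_eq0; apply/eqP.
  transitivity (r * (1 - (p ^+ 2 + q ^+ 2)) + p * (p * r + q * t)).
    by rewrite /m; ring.
  by rewrite pq o subrr !mulr0 addr0.
have tE : t = p * m.
  apply/eqP; rewrite -subr_eq0; apply/eqP.
  transitivity (t * (1 - (p ^+ 2 + q ^+ 2)) + q * (p * r + q * t)).
    by rewrite /m; ring.
  by rewrite pq o subrr !mulr0 addr0.
have m2 : (m - 1) * (m + 1) = 0.
  transitivity
    ((p ^+ 2 + q ^+ 2) * (r ^+ 2 + t ^+ 2) - (p * r + q * t) ^+ 2 - 1).
    by rewrite /m; ring.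
  by rewrite pq rt o mulr1 expr0n /= subr0 subrr.
move/eqP: m2; rewrite mulf_eq0 subr_eq0 addr_eq0 => /orP[|] /eqP mE.
  by left; rewrite rE tE mE mulNr !mulr1.
by right; rewrite rE tE mE !mulrN !mulr1 opprK.
Qed.

Lemma dot2_lin2 {p q r t : R} (z w : R * R) :
  p ^+ 2 + q ^+ 2 = 1 -> r ^+ 2 + t ^+ 2 = 1 -> p * r + q * t = 0 ->
  dot2 (lin2 p q r t z) (lin2 p q r t w) = dot2 z w.
Proof.
move=> pq rt o; rewrite -[RHS]mul1r -pq /dot2 /lin2 /=.
by case: (orthonormal_rows pq rt o) => -[-> ->]; ring.
Qed.

Lemma ge0_integral_orthogonal (h : T2 -> \bar R) {p q r t : R} :
  p ^+ 2 + q ^+ 2 = 1 -> r ^+ 2 + t ^+ 2 = 1 -> p * r + q * t = 0 ->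
  measurable_fun setT h -> (forall z, (0 <= h z)%E) ->
  (\int[mu2]_z h (lin2 p q r t z) = \int[mu2]_z h z)%E.
Proof.
move=> pq rt o mh h0.
case: (orthonormal_rows pq rt o) => -[-> ->].
  have -> : lin2 p q (- q) p = lin2 p (- - q) (- q) p by rewrite opprK.
  by rewrite ge0_integral_rotation // sqrrN.
have reflected z : lin2 p q q (- p) z = lin2 p (- q) q p (lin2 1 0 0 (-1) z).
  by rewrite /lin2 /=; congr (_, _); ring.
under eq_integral do rewrite reflected.
rewrite (ge0_integral_reflect2 (h \o lin2 p (- q) q p) _ (fun z => h0 _)).
  by rewrite ge0_integral_rotation // addrC.
by apply: measurableT_comp; last exact: measurable_lin2.
Qed.

End plane_maps.

Section gauss2.
Context {R : realType}.
Local Notation mu := (@lebesgue_measure R).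
Local Notation mu2 := (@lebesgue_measure R \x @lebesgue_measure R)%E.
Local Notation T2 := (measurableTypeR R * measurableTypeR R)%type.
Local Notation phi := (@gauss2_pdf R (0, 0)).
Local Notation P := (@gauss2_prob R (0, 0)).

Lemma gauss2_pdf_gt0 (xi z : R * R) : 0 < gauss2_pdf xi z.
Proof. by rewrite mulr_gt0 ?expR_gt0 // invr_gt0 mulr_gt0 ?pi_gt0. Qed.

Lemma gauss2_pdf_center (xi z : R * R) :
  gauss2_pdf xi z = phi (z.1 - xi.1, z.2 - xi.2).
Proof. by rewrite /gauss2_pdf !subr0. Qed.

Lemma measurable_gauss2_pdf (xi : R * R) :
  measurable_fun setT (gauss2_pdf xi : T2 -> R).
Proof.
apply: measurable_funM => //; apply: measurableT_comp => //.
apply: measurable_funM => //; apply: measurableT_comp => //.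
by apply: measurable_funD; apply: measurable_funX; apply: measurable_funB.
Qed.

Lemma measurable_gauss2_pdf_indic (xi : R * R) (A : set T2) : measurable A ->
  measurable_fun setT (fun z : T2 => (gauss2_pdf xi z * \1_A z)%:E).
Proof.
move=> mA; apply/measurable_EFinP; apply: measurable_funM.
  exact: measurable_gauss2_pdf.
exact: measurable_indic.
Qed.

Lemma gauss2_pdf_lin2 {p q r t : R} (z : R * R) :
  p ^+ 2 + q ^+ 2 = 1 -> r ^+ 2 + t ^+ 2 = 1 -> p * r + q * t = 0 ->
  phi (lin2 p q r t z) = phi z.
Proof.
move=> pq rt o; rewrite /gauss2_pdf !subr0 !expr2.
by have := dot2_lin2 z z pq rt o; rewrite /dot2 => ->.
Qed.

Lemma gauss2_pdf_normal (z : R * R) :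
  phi z = normal_pdf 0 1 z.1 * normal_pdf 0 1 z.2.
Proof.
rewrite /gauss2_pdf !normal_pdfE ?oner_eq0 // /normal_peak /normal_fun !subr0.
rewrite mulrACA -invfM -expr2.
rewrite sqr_sqrtr ?mulrn_wge0 ?mulr_ge0 ?sqr_ge0 ?pi_ge0 //.
rewrite -expRD expr1n mul1r mulr_natl; congr (_ * expR _); ring.
Qed.

Lemma integral_gauss2_pdf : (\int[mu2]_z (phi z)%:E = 1)%E.
Proof.
under eq_integral do rewrite gauss2_pdf_normal EFinM.
have mN : measurable_fun setT (normal_pdf (0 : R) 1).
  exact: measurable_normal_pdf.
rewrite fubini_tonelli1 //=; last 2 first.
- apply/measurable_EFinP; apply: measurable_funM.
    exact: measurableT_comp mN measurable_fst.
  exact: measurableT_comp mN measurable_snd.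
- by move=> z; rewrite -EFinM lee_fin mulr_ge0 ?normal_pdf_ge0.
have inner x : (\int[mu]_y ((normal_pdf 0 1 x)%:E * (normal_pdf 0 1 y)%:E) =
    (normal_pdf 0 1 x)%:E)%E.
  rewrite ge0_integralZl //= ?integral_normal_pdf ?mule1 //.
  - exact/measurable_EFinP.
  - by move=> y _; rewrite lee_fin normal_pdf_ge0.
  - by rewrite lee_fin normal_pdf_ge0.
rewrite /fubini_F /=; under eq_integral do rewrite inner.
exact: integral_normal_pdf.
Qed.

Lemma gauss2_probE (xi : R * R) (A : set T2) :
  gauss2_prob xi A = (\int[mu2]_z (gauss2_pdf xi z * \1_A z)%:E)%E.
Proof.
rewrite /gauss2_prob integral_mkcond; apply: eq_integral => z _.
by rewrite patchE indicE; case: ifPn => _; rewrite ?mulr1 ?mulr0.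
Qed.

Lemma gauss2_prob_shift {xi : R * R} {A : set T2} : measurable A ->
  gauss2_prob xi A = P (translate2 xi @^-1` A).
Proof.
move=> mA; have mB : measurable (translate2 xi @^-1` A).
  by rewrite -[X in measurable X]setTI; exact: measurable_translate2.
rewrite !gauss2_probE -[RHS](ge0_integral_translate2 _ (- xi.1, - xi.2));
  last 2 first.
- exact: measurable_gauss2_pdf_indic.
- by move=> z; rewrite lee_fin mulr_ge0 // ltW // gauss2_pdf_gt0.
apply: eq_integral => z _; rewrite gauss2_pdf_center.
have -> : \1_(translate2 xi @^-1` A) (z.1 - xi.1, z.2 - xi.2) =
    \1_A (translate2 xi (z.1 - xi.1, z.2 - xi.2)) :> R by [].
by rewrite /translate2 /= !subrK -surjective_pairing.
Qed.

Lemma gauss2_prob_lin2 {p q r t : R} {A : set T2} :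
  p ^+ 2 + q ^+ 2 = 1 -> r ^+ 2 + t ^+ 2 = 1 -> p * r + q * t = 0 ->
  measurable A -> P (lin2 p q r t @^-1` A) = P A.
Proof.
move=> pq rt o mA; rewrite !gauss2_probE.
rewrite -[RHS](ge0_integral_orthogonal _ pq rt o); last 2 first.
- exact: measurable_gauss2_pdf_indic.
- by move=> z; rewrite lee_fin mulr_ge0 // ltW // gauss2_pdf_gt0.
by apply: eq_integral => z _; rewrite gauss2_pdf_lin2.
Qed.

Lemma gauss2_prob_le1 {A : set T2} : measurable A -> (P A <= 1)%E.
Proof.
move=> mA; rewrite -integral_gauss2_pdf; apply: ge0_subset_integral => //.
- by apply/measurable_EFinP; exact: measurable_gauss2_pdf.
- by move=> z _; rewrite lee_fin ltW // gauss2_pdf_gt0.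
Qed.

Lemma gauss2_prob_fin_num {A : set T2} : measurable A -> P A \is a fin_num.
Proof.
move=> mA; rewrite ge0_fin_numE.
  exact: le_lt_trans (gauss2_prob_le1 mA) (ltry _).
by apply: integral_ge0 => z _; rewrite lee_fin ltW // gauss2_pdf_gt0.
Qed.

Lemma gauss2_prob_lt {A B : set T2} : measurable A -> measurable B ->
  A `<=` B -> (0 < P (B `\` A))%E -> (P A < P B)%E.
Proof.
move=> mA mB AB BA_gt0; rewrite -[in X in (_ < X)%E](setDUK AB) /gauss2_prob.
rewrite ge0_integral_setU //; first by rewrite lteDl // gauss2_prob_fin_num.
- exact: measurableD.
- by apply/measurable_EFinP/measurable_funTS; exact: measurable_gauss2_pdf.
- by move=> z _; rewrite lee_fin ltW // gauss2_pdf_gt0.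
- by rewrite disj_set2E setDIK.
Qed.

Lemma sqr_le_itv (a b z : R) : a < z < b -> z ^+ 2 <= a ^+ 2 + b ^+ 2.
Proof. by case/andP=> az zb; have [z0|z0] := leP 0 z; nra. Qed.

Lemma gauss2_prob_gt0 {A : set T2} {a1 b1 a2 b2 : R} : measurable A ->
  a1 < b1 -> a2 < b2 -> `]a1, b1[ `*` `]a2, b2[ `<=` A -> (0 < P A)%E.
Proof.
move=> mA ab1 ab2 boxA; set box := (`]a1, b1[ `*` `]a2, b2[)%classic in boxA.
have mbox : measurable (box : set T2).
  by apply: measurableX; exact: measurable_itv.
pose m := (2 * pi)^-1 * expR (- (a1 ^+ 2 + b1 ^+ 2 + (a2 ^+ 2 + b2 ^+ 2)) / 2).
have m_gt0 : 0 < m by rewrite mulr_gt0 ?expR_gt0 // invr_gt0 mulr_gt0 ?pi_gt0.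
have m_le z : box z -> m <= phi z.
  rewrite /box /= !in_itv /= => -[z1 z2].
  rewrite /gauss2_pdf !subr0 ler_pM2l ?invr_gt0 ?mulr_gt0 ?pi_gt0 // ler_expR.
  by rewrite !mulNr lerN2 ler_pM2r ?invr_gt0 // lerD // sqr_le_itv.
have box_gt0 : (0 < \int[mu2]_(z in box) m%:E)%E.
  rewrite integral_cst //.
  rewrite [X in (_ * X)%E](_ : _ = mu `]a1, b1[ * mu `]a2, b2[)%E;
    last by apply: product_measure1E; exact: measurable_itv.
  rewrite !lebesgue_measure_itv /= !lte_fin ab1 ab2 -!EFinM lte_fin.
  by rewrite mulr_gt0 // mulr_gt0 // subr_gt0.
apply: (lt_le_trans box_gt0).
apply: (@le_trans _ _ (\int[mu2]_(z in box) (phi z)%:E)%E).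
  apply: ge0_le_integral => //.
  - by move=> z _; rewrite lee_fin ltW.
  - by apply/measurable_EFinP/measurable_funTS; exact: measurable_gauss2_pdf.
apply: ge0_subset_integral => //.
- by apply/measurable_EFinP/measurable_funTS; exact: measurable_gauss2_pdf.
- by move=> z _; rewrite lee_fin ltW // gauss2_pdf_gt0.
Qed.

End gauss2.

Section wedge.
Context {R : realType}.
Local Notation T2 := (measurableTypeR R * measurableTypeR R)%type.
Local Notation P := (@gauss2_prob R (0, 0)).

Definition halfplane (w : R * R) (c : R) : set T2 := [set z | dot2 z w <= c].
Definition wedge (w1 w2 : R * R) (c1 c2 : R) : set T2 :=
  halfplane w1 c1 `&` halfplane w2 c2.

Lemma dot2C (u v : R * R) : dot2 u v = dot2 v u.
Proof. by rewrite /dot2 mulrC (mulrC u.2). Qed.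

Lemma measurable_halfplane w c : measurable (halfplane w c).
Proof.
have := measurable_affine2 w.1 w.2 0 measurableT _
  (@measurable_itv R `]-oo, c]).
rewrite setTI; congr measurable; apply/seteqP; split => z /=;
  by rewrite /halfplane /dot2 in_itv /= addr0 (mulrC w.1) (mulrC w.2).
Qed.

Lemma measurable_wedge w1 w2 c1 c2 : measurable (wedge w1 w2 c1 c2).
Proof. by apply: measurableI; exact: measurable_halfplane. Qed.

Lemma wedgeC w1 w2 c1 c2 : wedge w1 w2 c1 c2 = wedge w2 w1 c2 c1.
Proof. exact: setIC. Qed.

Lemma gamma12_wedge (v1 v2 xi : R * R) :
  gamma12 v1 v2 xi = P (wedge v1 v2 (- dot2 v1 xi) (- dot2 v2 xi)).
Proof.
rewrite /gamma12 (gauss2_prob_shift (measurable_wedge v1 v2 0 0)); congr P.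
have dotE (z v : R * R) :
    dot2 (z.1 + xi.1, z.2 + xi.2) v = dot2 z v + dot2 v xi.
  by rewrite /dot2 /=; ring.
apply/seteqP; split => z [h1 h2]; split; move: h1 h2;
  by rewrite /halfplane /= !dotE; lra.
Qed.

Lemma lin2_preimage_wedge {p q r t : R} w1 w2 c1 c2 :
  p ^+ 2 + q ^+ 2 = 1 -> r ^+ 2 + t ^+ 2 = 1 -> p * r + q * t = 0 ->
  lin2 p q r t @^-1` wedge (lin2 p q r t w1) (lin2 p q r t w2) c1 c2 =
  wedge w1 w2 c1 c2.
Proof.
move=> pq rt o; have dotQ z v := dot2_lin2 z v pq rt o.
apply/seteqP; split => z [h1 h2]; split;
  by rewrite /halfplane /= ?dotQ in h1 h2 *.
Qed.

Lemma sub1_sqr_dot2E {v1 v2 : R * R} : dot2 v1 v1 = 1 -> dot2 v2 v2 = 1 ->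
  1 - dot2 v1 v2 ^+ 2 =
  (v1.1 - dot2 v1 v2 * v2.1) ^+ 2 + (v1.2 - dot2 v1 v2 * v2.2) ^+ 2.
Proof.
move=> u1 u2.
transitivity
  (dot2 v1 v1 - 2 * dot2 v1 v2 * dot2 v1 v2 + dot2 v1 v2 ^+ 2 * dot2 v2 v2).
  by rewrite u1 u2; ring.
by rewrite /dot2; ring.
Qed.

Lemma sqr_dot2_lt1 {v1 v2 : R * R} : dot2 v1 v1 = 1 -> dot2 v2 v2 = 1 ->
  lin_indep2 v1 v2 -> dot2 v1 v2 ^+ 2 < 1.
Proof.
move=> u1 u2 li; rewrite -subr_gt0 sub1_sqr_dot2E // lt0r.
rewrite addr_ge0 ?sqr_ge0 // andbT.
rewrite paddr_eq0 ?sqr_ge0 // !sqrf_eq0 subr_eq0 [_ - _ == 0]subr_eq0.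
apply/negP => /andP[/eqP h1 /eqP h2].
have [] := li 1 (- dot2 v1 v2); rewrite ?mul1r ?mulNr ?h1 ?h2 ?subrr //.
by move/eqP; rewrite oner_eq0.
Qed.

Definition std_wedge (a c1 c2 : R) : set T2 :=
  wedge (a, Num.sqrt (1 - a ^+ 2)) (1, 0) c1 c2.

Lemma gauss2_prob_std_wedge {v1 v2 : R * R} {c1 c2 : R} :
  dot2 v1 v1 = 1 -> dot2 v2 v2 = 1 -> lin_indep2 v1 v2 ->
  P (wedge v1 v2 c1 c2) = P (std_wedge (dot2 v1 v2) c1 c2).
Proof.
move=> u1 u2 li; have a1 := sqr_dot2_lt1 u1 u2 li.
have dE := sub1_sqr_dot2E u1 u2.
set a := dot2 v1 v2 in a1 dE *; set s := Num.sqrt (1 - a ^+ 2).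
have s_neq0 : s != 0 by rewrite gt_eqF // sqrtr_gt0 subr_gt0.
have s2 : s ^+ 2 = 1 - a ^+ 2 by rewrite sqr_sqrtr // subr_ge0 ltW.
(* Gram-Schmidt on [v2], [v1]: the rows [v2] and [(r, t)] are orthonormal. *)
pose r := (v1.1 - a * v2.1) / s; pose t := (v1.2 - a * v2.2) / s.
have pq : v2.1 ^+ 2 + v2.2 ^+ 2 = 1 by rewrite -u2 /dot2 !expr2.
have rt : r ^+ 2 + t ^+ 2 = 1.
  transitivity (((v1.1 - a * v2.1) ^+ 2 + (v1.2 - a * v2.2) ^+ 2) / s ^+ 2).
    by rewrite /r /t; field.
  by rewrite -dE -s2 divff // expf_neq0.
have o : v2.1 * r + v2.2 * t = 0.
  transitivity ((dot2 v1 v2 - a * dot2 v2 v2) / s).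
    by rewrite /r /t /dot2; field.
  by rewrite u2 mulr1 subrr mul0r.
have Qv1 : lin2 v2.1 v2.2 r t v1 = (a, s).
  congr pair; first by rewrite /a /dot2 mulrC (mulrC v2.2).
  transitivity ((dot2 v1 v1 - a * dot2 v1 v2) / s).
    by rewrite /r /t /dot2; field.
  by rewrite u1 -/a -expr2 -s2 expr2 mulfK.
have Qv2 : lin2 v2.1 v2.2 r t v2 = (1, 0).
  congr pair; first by rewrite -pq !expr2.
  by rewrite -o mulrC (mulrC t).
rewrite /std_wedge -/s -Qv1 -Qv2.
by rewrite -[RHS](gauss2_prob_lin2 pq rt o (measurable_wedge _ _ _ _))
  lin2_preimage_wedge.
Qed.

End wedge.

Section monotone.
Context {R : realType}.
Local Notation P := (@gauss2_prob R (0, 0)).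

Lemma det_upper_unit_gt0 {a s a' s' : R} : 0 < s -> 0 < s' ->
  s ^+ 2 + a ^+ 2 = 1 -> s' ^+ 2 + a' ^+ 2 = 1 -> a < a' -> 0 < a' * s - a * s'.
Proof.
move=> s0 s'0 e e' aa'; have [a'_gt0|a'_le0] := ltP 0 a'.
  have [a_le0|a_gt0] := leP a 0; first by nra.
  have : s' < s by nra.
  nra.
have : s < s' by nra.
nra.
Qed.

Lemma wedge_subset {a s a' s' d1 d2 : R} : 0 < s -> 0 < s' ->
  0 <= a' * s - a * s' -> 0 <= (a' * s - a * s') * d2 + (s' - s) * d1 ->
  wedge (a, s) (1, 0) (- d1) (- d2) `<=` wedge (a', s') (1, 0) (- d1) (- d2).
Proof.
move=> s0 s'0 D0 nested z [h1 h2]; split => //; move: h1 h2.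
rewrite /halfplane /dot2 /= mulr1 mulr0 addr0 => h1 h2.
nra.
Qed.

Lemma mul_sqr_le1_itv {a u : R} : a ^+ 2 <= 1 -> -1 < u < 1 -> -1 < a * u < 1.
Proof.
move=> a1 /andP[u1 u2]; have : u ^+ 2 < 1 by nra.
have := sqr_ge0 (a - u); have := sqr_ge0 (a + u).
by move=> *; apply/andP; split; nra.
Qed.

Lemma wedge_diff_box {a s a' s' d1 d2 : R} : 0 < s -> 0 < s' ->
  s ^+ 2 + a ^+ 2 = 1 -> s' ^+ 2 + a' ^+ 2 = 1 -> 0 < a' * s - a * s' ->
  0 <= d1 -> 0 <= d2 ->
  exists x0 : R * R, `]x0.1 - 1, x0.1 + 1[ `*` `]x0.2 - 1, x0.2 + 1[ `<=`
    wedge (a', s') (1, 0) (- d1) (- d2) `\` wedge (a, s) (1, 0) (- d1) (- d2).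
Proof.
move=> s0 s'0 e e' D0 d1_ge0 d2_ge0; set D := a' * s - a * s' in D0 *.
(* Moving along [(- (s + s'), a + a')] increases [dot2 _ (a, s)] at rate [D]
   and decreases [dot2 _ (a', s')] and [dot2 _ (1, 0)]; at time [T] the unit
   square around the current point has left [wedge (a, s) ...] but not yet
   [wedge (a', s') ...]. *)
pose T := (d1 + 2) / D + (d2 + 1) / (s + s').
have ss'_gt0 : 0 < s + s' by rewrite addr_gt0.
have TD : d1 + 2 <= T * D.
  have -> : T * D = (d1 + 2) + (d2 + 1) * D / (s + s').
    by rewrite /T; field; rewrite ?gt_eqF.
  by rewrite lerDl divr_ge0 ?mulr_ge0 ?ltW //; lra.
have Tss' : d2 + 1 <= T * (s + s').
  have -> : T * (s + s') = (d1 + 2) * (s + s') / D + (d2 + 1).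
    by rewrite /T; field; rewrite ?gt_eqF.
  by rewrite lerDr divr_ge0 ?mulr_ge0 ?ltW //; lra.
exists (- (T * (s + s')), T * (a + a')) => z /= [].
rewrite !in_itv /= => /andP[z1 z1'] /andP[z2 z2'].
have [u u_itv zu] : exists2 u, -1 < u < 1 & z.1 = - (T * (s + s')) + u.
  by exists (z.1 + T * (s + s')); [apply/andP; split; lra | ring].
have [v v_itv zv] : exists2 v, -1 < v < 1 & z.2 = T * (a + a') + v.
  by exists (z.2 - T * (a + a')); [apply/andP; split; lra | ring].
have sq_le1 (x y : R) : x ^+ 2 + y ^+ 2 = 1 -> x ^+ 2 <= 1 /\ y ^+ 2 <= 1.
  by move=> xy; split; nra.
have [s_le1 a_le1] := sq_le1 _ _ e; have [s'_le1 a'_le1] := sq_le1 _ _ e'.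
move: (mul_sqr_le1_itv a_le1 u_itv) (mul_sqr_le1_itv s_le1 v_itv).
move: (mul_sqr_le1_itv a'_le1 u_itv) (mul_sqr_le1_itv s'_le1 v_itv).
move=> /andP[? ?] /andP[? ?] /andP[? ?] /andP[? ?].
have dot_a : (- (T * (s + s')) + u) * a + (T * (a + a') + v) * s =
    T * D + a * u + s * v by rewrite /D; ring.
have dot_a' : (- (T * (s + s')) + u) * a' + (T * (a + a') + v) * s' =
    - (T * D) + a' * u + s' * v by rewrite /D; ring.
rewrite /wedge /halfplane /dot2 /= mulr1 mulr0 addr0 zu zv dot_a dot_a'.
by split; [split | move=> [+ _]]; lra.
Qed.

Lemma gauss2_prob_upper_wedge_lt (a s a' s' d1 d2 : R) : 0 < s -> 0 < s' ->
  s ^+ 2 + a ^+ 2 = 1 -> s' ^+ 2 + a' ^+ 2 = 1 -> a < a' ->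
  0 <= d1 -> 0 <= d2 ->
  0 <= (a' * s - a * s') * d2 + (s' - s) * d1 ->
  (P (wedge (a, s) (1, 0) (- d1) (- d2))%R <
   P (wedge (a', s') (1, 0) (- d1) (- d2))%R)%E.
Proof.
move=> s0 s'0 e e' aa' d1_ge0 d2_ge0 nested.
have D_gt0 := det_upper_unit_gt0 s0 s'0 e e' aa'.
have [x0 box_sub] := wedge_diff_box s0 s'0 e e' D_gt0 d1_ge0 d2_ge0.
apply: gauss2_prob_lt; try exact: measurable_wedge.
  exact: wedge_subset s0 s'0 (ltW D_gt0) nested.
apply: gauss2_prob_gt0 box_sub; last 2 first.
- by rewrite ltrBlDr -addrA ltrDl.
- by rewrite ltrBlDr -addrA ltrDl.
by apply: measurableD; exact: measurable_wedge.
Qed.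

Lemma upper_wedge_nested {a s a' s' d1 d2 : R} : 0 < s -> 0 < s' ->
  s ^+ 2 + a ^+ 2 = 1 -> s' ^+ 2 + a' ^+ 2 = 1 -> a < a' ->
  0 <= d1 -> 0 <= d2 ->
  0 <= (a' * s - a * s') * d2 + (s' - s) * d1 \/
  0 <= (a' * s - a * s') * d1 + (s' - s) * d2.
Proof.
move=> s0 s'0 e e' aa' d1_ge0 d2_ge0.
have D_gt0 := det_upper_unit_gt0 s0 s'0 e e' aa'.
set D := a' * s - a * s' in D_gt0 *; pose C := a * a' + s * s'.
(* [C] is the cosine of the angle between [(a, s)] and [(a', s')]. *)
have C_le1 : 0 <= 1 - C.
  by have := sqr_ge0 (a - a'); have := sqr_ge0 (s - s'); rewrite /C; nra.
have nestedE x y : D * y + (s' - s) * x = s' * (1 - C) * x + D * (y - a' * x).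
  have sE : s = s' * C + a' * D by rewrite -[LHS]mulr1 -e' /C /D; ring.
  by rewrite [in LHS]sE /C /D; ring.
have first_ge0 x : 0 <= x -> 0 <= s' * (1 - C) * x.
  by move=> x_ge0; rewrite !mulr_ge0 // ltW.
have [a'd1_le|a'd1_gt] := leP (a' * d1) d2; [left | right].
  rewrite nestedE; apply: addr_ge0; first exact: first_ge0.
  by apply: mulr_ge0; [exact: ltW | rewrite subr_ge0].
rewrite nestedE; apply: addr_ge0; first exact: first_ge0.
apply: mulr_ge0; first exact: ltW.
have a'_lt1 : a' < 1 by clear -s'0 e'; nra.
rewrite subr_ge0; clear -a'_lt1 a'd1_gt d1_ge0 d2_ge0; nra.
Qed.

Lemma lin_indep2C {u v : R * R} : lin_indep2 u v -> lin_indep2 v u.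
Proof.
by move=> li a b h1 h2; have [] := li b a; rewrite 1?addrC // => -> ->.
Qed.

Lemma gauss2_prob_wedge_lt {v1 v2 v1' v2' : R * R} {d1 d2 : R} :
  dot2 v1 v1 = 1 -> dot2 v2 v2 = 1 -> lin_indep2 v1 v2 ->
  dot2 v1' v1' = 1 -> dot2 v2' v2' = 1 -> lin_indep2 v1' v2' ->
  0 <= d1 -> 0 <= d2 -> dot2 v1 v2 < dot2 v1' v2' ->
  (P (wedge v1 v2 (- d1) (- d2))%R < P (wedge v1' v2' (- d1) (- d2))%R)%E.
Proof.
move=> u1 u2 li u1' u2' li' d1_ge0 d2_ge0 aa'.
have upper (a : R) : a ^+ 2 < 1 ->
    0 < Num.sqrt (1 - a ^+ 2) /\ Num.sqrt (1 - a ^+ 2) ^+ 2 + a ^+ 2 = 1.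
  move=> a1; rewrite sqrtr_gt0 subr_gt0 a1 sqr_sqrtr ?subrK //.
  by rewrite subr_ge0 ltW.
have [s_gt0 e] := upper _ (sqr_dot2_lt1 u1 u2 li).
have [s'_gt0 e'] := upper _ (sqr_dot2_lt1 u1' u2' li').
have [nested|nested] := upper_wedge_nested s_gt0 s'_gt0 e e' aa' d1_ge0 d2_ge0.
  rewrite (gauss2_prob_std_wedge u1 u2 li).
  rewrite (gauss2_prob_std_wedge u1' u2' li').
  exact: gauss2_prob_upper_wedge_lt.
rewrite wedgeC (gauss2_prob_std_wedge u2 u1 (lin_indep2C li)).
rewrite wedgeC (gauss2_prob_std_wedge u2' u1' (lin_indep2C li')).
rewrite dot2C (dot2C v2'); exact: gauss2_prob_upper_wedge_lt.
Qed.

End monotone.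

Theorem lemma2 (R : realType) (v1 v2 xi v1' v2' xi' : R * R) :
  admissible v1 v2 xi ->
  admissible v1' v2' xi' ->
  dot2 v1 xi = dot2 v1' xi' ->
  dot2 v2 xi = dot2 v2' xi' ->
  gamma12 v1 v2 xi = gamma12 v1' v2' xi' ->
  dot2 v1' v2' = dot2 v1 v2.
Proof.
move=> [u1 u2 li d1_ge0 d2_ge0] [u1' u2' li' _ _] e1 e2.
rewrite !gamma12_wedge -e1 -e2 => gamma_eq.
have [lt|gt|//] := ltgtP (dot2 v1' v2') (dot2 v1 v2).
  have := gauss2_prob_wedge_lt u1' u2' li' u1 u2 li d1_ge0 d2_ge0 lt.
  by rewrite gamma_eq ltxx.
have := gauss2_prob_wedge_lt u1 u2 li u1' u2' li' d1_ge0 d2_ge0 gt.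
by rewrite gamma_eq ltxx.
Qed.
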